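(* Let $X$ be a Gorenstein fake weighted projective space with weights $(\lambda_0,\ldots,\lambda_n)$ having at worst canonical singularities, and let $h:=\sum_{i=0}^n\lambda_i$. Then $h\leq t_n$, where $t_n:=y_n-1$ and $(y_k)$ is the Sylvester sequence $y_0:=2$, $y_k:=1+y_0y_1\cdots y_{k-1}$ for $k\ge1$.
   Context: Let $N\cong\mathbb{Z}^n$ be a lattice and $N_\mathbb{R}:=N\otimes_\mathbb{Z}\mathbb{R}$. Let $\rho_0,\ldots,\rho_n\in N$ be primitive lattice points with $N_\mathbb{R}=\sum_{i=0}^n\mathbb{R}_{\geq0}\rho_i$. There are positive integers $\lambda_0,\ldots,\lambda_n$ with $\gcd\{\lambda_0,\ldots,\lambda_n\}=1$, unique up to order, such that $\sum_{i=0}^n\lambda_i\rho_i=0$. The cones $\sigma_i$ generated by $\{\rho_j: j\neq i\}$ generate a complete simplicial fan; the associated projective toric variety $X$ is called a fake weighted projective space with weights $(\lambda_0,\ldots,\lambda_n)$. *)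

From HB Require Import structures.
From mathcomp Require Import all_boot all_order all_algebra.
Set Implicit Arguments. Unset Strict Implicit. Unset Printing Implicit Defensive.
Import Order.TTheory GRing.Theory Num.Theory.
Local Open Scope ring_scope.

(* Lattice N = Z^n: points are row vectors 'rV[int]_n; the dual lattice M is
   also 'rV[int]_n with the standard pairing. N_Q = 'rV[rat]_n. *)

Definition pairing {R : pzRingType} {n : nat} (u v : 'rV[R]_n) : R :=
  \sum_(k < n) u 0 k * v 0 k.

Definition toQ {n : nat} (v : 'rV[int]_n) : 'rV[rat]_n := map_mx intr v.

Definition primitive {n : nat} (v : 'rV[int]_n) : Prop :=
  forall (k : int) (w : 'rV[int]_n), v = k *: w -> k = 1 \/ k = -1.

Definition in_cone_sigma {n : nat} (rho : 'I_n.+1 -> 'rV[int]_n) (i : 'I_n.+1)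
  (v : 'rV[rat]_n) : Prop :=
  exists c : 'I_n.+1 -> rat, (forall j, 0 <= c j) /\
    v = \sum_(j < n.+1 | j != i) c j *: toQ (rho j).

(* N_R = sum_i R_{>=0} rho_i (stated over Q, equivalent since the rho_i are
   rational) *)
Definition spans_positively {n : nat} (rho : 'I_n.+1 -> 'rV[int]_n) : Prop :=
  forall v : 'rV[rat]_n, exists c : 'I_n.+1 -> rat,
    (forall j, 0 <= c j) /\ v = \sum_(j < n.+1) c j *: toQ (rho j).

Definition are_weights {n : nat} (rho : 'I_n.+1 -> 'rV[int]_n)
  (lam : 'I_n.+1 -> nat) : Prop :=
  (forall i, (0 < lam i)%N) /\ (\big[gcdn/0%N]_(i < n.+1) lam i = 1%N) /\
  \sum_(i < n.+1) (lam i)%:Z *: rho i = 0.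

(* Gorenstein: on every maximal cone sigma_i the canonical divisor is Cartier,
   i.e. there is u_i in M with <u_i, rho_j> = 1 for all j <> i. *)
Definition gorenstein {n : nat} (rho : 'I_n.+1 -> 'rV[int]_n) : Prop :=
  forall i : 'I_n.+1, exists u : 'rV[int]_n,
    forall j, j != i -> pairing u (rho j) = 1.

(* canonical singularities (Q-Gorenstein toric criterion): for each maximal
   cone sigma_i with u_i in M_Q such that <u_i, rho_j> = 1 for j <> i, every
   nonzero lattice point v of sigma_i satisfies <u_i, v> >= 1. *)
Definition canonical_sing {n : nat} (rho : 'I_n.+1 -> 'rV[int]_n) : Prop :=
  forall (i : 'I_n.+1) (u : 'rV[rat]_n),
    (forall j, j != i -> pairing u (toQ (rho j)) = 1) ->
    forall v : 'rV[int]_n, v != 0 -> in_cone_sigma rho i (toQ v) ->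
      1 <= pairing u (toQ v).

(* Sylvester sequence: y_0 = 2, y_k = 1 + y_0 ... y_{k-1}.
   syl_prod k = y_0 * ... * y_{k-1}. *)
Fixpoint syl_prod (k : nat) : nat :=
  match k with
  | 0 => 1
  | k'.+1 => syl_prod k' * (1 + syl_prod k')
  end.
Definition sylvester (k : nat) : nat := 1 + syl_prod k.
Definition t_seq (n : nat) : nat := sylvester n - 1.

From HB Require Import structures.
From mathcomp Require Import all_boot all_order all_algebra ring.
Set Implicit Arguments. Unset Strict Implicit. Unset Printing Implicit Defensive.
Import Order.TTheory GRing.Theory Num.Theory.

(* Pairing the relation sum_j lam_j rho_j = 0 with a Gorenstein vector u_i
   (<u_i, rho_j> = 1 for j <> i) gives h = lam_i (1 - <u_i, rho_i>), so every
   weight divides h; this is the only geometric input.  The rest is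
   arithmetic on coprime positive integers dividing their sum:
   (1) each prime divides h with exponent at least that of every weight and
       fails to divide two of the weights, so lam_0 ... lam_n | h^(n-1);
   (2) for the weights sorted as w_0 >= ... >= w_n, the product of the first
       j+1 divides h^j times their sum, so x_i = w_i / h satisfies
       x_0 ... x_j <= x_(j+1) + ... + x_n;
   (3) a majorization inequality (Abel summation and AM-GM) compares such a
       sequence with the Sylvester profile 1/y_0, ..., 1/y_(n-1),
       1/(y_0 ... y_(n-1)), giving h^(n+1) <= w_0 ... w_n (y_0 ... y_(n-1))^2.
   With (1) this yields h^2 <= (y_0 ... y_(n-1))^2 = t_n^2. *)

Section Lattice.
Local Open Scope ring_scope.

Lemma pairing_sum (n : nat) (I : finType) (u : 'rV[int]_n) (c : I -> int)
    (r : I -> 'rV[int]_n) :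
  pairing u (\sum_i c i *: r i) = \sum_i c i * pairing u (r i).
Proof.
rewrite /pairing (eq_bigr (fun k => \sum_i u 0 k * (c i * r i 0 k))).
  rewrite exchange_big; apply: eq_bigr => i _; rewrite mulr_sumr.
  by apply: eq_bigr => k _; rewrite mulrCA.
by move=> k _; rewrite summxE mulr_sumr; apply: eq_bigr => i _; rewrite mxE.
Qed.

(* The geometric input: on a Gorenstein fake weighted projective space every
   weight divides h = sum of the weights, since pairing the relation
   sum_j lam_j rho_j = 0 with u_i gives h = lam_i * (1 - <u_i, rho_i>). *)
Lemma gorenstein_weight_dvd (n : nat) (rho : 'I_n.+1 -> 'rV[int]_n)
    (lam : 'I_n.+1 -> nat) :
  are_weights rho lam -> gorenstein rho -> forall i, (lam i %| \sum_j lam j)%N.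
Proof.
move=> [_ [_ lam_rel]] gor i; have [u u_one] := gor i.
have := pairing_sum u (fun j => (lam j)%:Z) rho.
rewrite lam_rel (bigD1 i) //= (eq_bigr (fun j => (lam j)%:Z)); last first.
  by move=> j ji; rewrite u_one // mulr1.
have -> : pairing u 0 = 0 by rewrite /pairing big1 // => k _; rewrite mxE mulr0.
move=> /eqP; rewrite eq_sym addr_eq0 => /eqP rest.
have h_eq : (\sum_j lam j)%N%:Z = (lam i)%:Z * (1 - pairing u (rho i)).
  by rewrite (big_morph Posz PoszD (erefl _)) (bigD1 i) //= mulrBr mulr1 rest opprK.
by have := congr1 absz h_eq; rewrite abszM !absz_nat => ->; apply: dvdn_mulr.
Qed.

End Lattice.

(* If coprime positive integers all divide their sum, then every prime p
   dividing the sum fails to divide at least two of them: one because the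
   gcd is 1, a second because p would otherwise divide the first one too. *)
Lemma two_weights_prime_to (I : finType) (lam : I -> nat) (p : nat) :
  prime p -> \big[gcdn/0]_i lam i = 1 -> p %| \sum_i lam i ->
  exists i0 i1, [/\ i0 != i1, ~~ (p %| lam i0) & ~~ (p %| lam i1)].
Proof.
move=> p_pr lam_gcd p_dvd.
have [i0 p_ndvd0] : exists i0, ~~ (p %| lam i0).
  case: (pickP (fun i => ~~ (p %| lam i))) => [i0 ? | all_dvd]; first by exists i0.
  have : p %| \big[gcdn/0]_i lam i.
    by apply/dvdn_biggcdP => i _; apply/negbFE/all_dvd.
  by rewrite lam_gcd dvdn1 => /eqP p1; rewrite p1 in p_pr.
case: (pickP (fun i => (i != i0) && ~~ (p %| lam i))) => [i1 /andP [ne ?] | others].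
  by exists i0, i1; rewrite eq_sym.
have dvd_rest : p %| \sum_(i | i != i0) lam i.
  by apply: dvdn_sum => i ne; move: (others i); rewrite /= ne => /negbFE.
by move: p_dvd; rewrite (bigD1 i0) //= dvdn_addl // (negbTE p_ndvd0).
Qed.

Lemma logn_prod (I : finType) (p : nat) (F : I -> nat) :
  (forall i, 0 < F i) -> logn p (\prod_i F i) = \sum_i logn p (F i).
Proof.
move=> F_gt0.
have [_ //] : 0 < \prod_i F i /\ logn p (\prod_i F i) = \sum_i logn p (F i).
elim/big_rec2: _ => [|i a b _ [b_gt0 IH]]; first by rewrite logn1.
by rewrite muln_gt0 F_gt0 b_gt0 lognM // IH.
Qed.

(* n+2 coprime positive weights each dividing their sum h have product
   dividing h^n: for every prime p two of the valuations vanish and the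
   other n are at most the valuation of h. *)
Lemma weights_prod_dvd (n : nat) (lam : 'I_n.+2 -> nat) :
  (forall i, 0 < lam i) -> \big[gcdn/0]_i lam i = 1 ->
  (forall i, lam i %| \sum_j lam j) -> \prod_i lam i %| (\sum_i lam i) ^ n.
Proof.
set h := \sum_i lam i => lam_gt0 lam_gcd lam_dvd.
have h_gt0 : 0 < h by rewrite /h (bigD1 ord0) // addn_gt0 lam_gt0.
apply/dvdn_partP => [|p]; first by rewrite prodn_gt0.
rewrite mem_primes => /and3P [p_pr _ _].
rewrite p_part pfactor_dvdn // ?expn_gt0 ?h_gt0 // lognX logn_prod //.
have log_le i : logn p (lam i) <= logn p h by apply: dvdn_leq_log.
have [Lh0|Lh_gt0] := posnP (logn p h).
  by rewrite big1 // => i _; apply/eqP; rewrite -leqn0 -Lh0.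
have p_dvd_h : p %| h by move: Lh_gt0; rewrite logn_gt0 mem_primes => /and3P [].
have [i0 [i1 [ne ndvd0 ndvd1]]] := two_weights_prime_to p_pr lam_gcd p_dvd_h.
have log0 i : ~~ (p %| lam i) -> logn p (lam i) = 0.
  by move=> ?; apply: logn_coprime; rewrite prime_coprime.
have card_rest : #|[pred i | (i != i0) && (i != i1)]| = n.
  have := card_ord n.+2; rewrite (cardD1 i0) (cardD1 i1) !inE eq_sym ne /=.
  rewrite !add1n => -[card_eq]; apply: etrans card_eq.
  by apply: eq_card => i; rewrite !inE andbT andbC.
rewrite (bigD1 i0) //= (bigD1 i1) 1?eq_sym //= !log0 // !add0n.
rewrite -[X in _ <= X * _]card_rest.
by rewrite -sum1_card big_distrl /=; apply: leq_sum => i _; rewrite mul1n.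
Qed.

Lemma prefix_prod_dvd (w : nat -> nat) (h j : nat) :
  (forall i, i <= j -> w i %| h) ->
  \prod_(0 <= i < j.+1) w i %| h ^ j * \sum_(0 <= i < j.+1) w i
  /\ \prod_(0 <= i < j.+1) w i %| h ^ j.+1.
Proof.
elim: j => [|j IH] w_dvd; first by rewrite !big_nat1 mul1n expn1 dvdnn w_dvd.
have [dvd_sum dvd_pow] := IH (fun i le_ij => w_dvd i (leqW le_ij)).
have wj_dvd : w j.+1 %| h by apply: w_dvd.
rewrite (big_nat_recr j.+1) // (big_nat_recr j.+1) //= expnS; split.
  rewrite mulnDr; apply: dvdn_add; last by rewrite -expnS dvdn_mul.
  by rewrite -mulnA mulnC dvdn_mul.
by rewrite mulnC expnS dvdn_mul.
Qed.

Lemma prefix_prod_le (w : nat -> nat) (h n j : nat) :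
  h = \sum_(0 <= i < n.+1) w i -> (forall i, i <= n -> 0 < w i) ->
  (forall i, i <= n -> w i %| h) -> j < n ->
  \prod_(0 <= i < j.+1) w i <= h ^ j * \sum_(j.+1 <= i < n.+1) w i.
Proof.
move=> h_def w_gt0 w_dvd lt_jn.
have w_dvd_j i : i <= j -> w i %| h.
  by move=> le_ij; apply/w_dvd/(leq_trans le_ij (ltnW lt_jn)).
have [dvd_sum dvd_pow] := prefix_prod_dvd w_dvd_j.
have rest : \sum_(j.+1 <= i < n.+1) w i = h - \sum_(0 <= i < j.+1) w i.
  by rewrite h_def (@big_cat_nat _ _ _ j.+1 0 n.+1) //= ?addKn // ltnS ltnW.
have h_gt0 : 0 < h by rewrite h_def big_ltn // addn_gt0 w_gt0.
have rest_gt0 : 0 < \sum_(j.+1 <= i < n.+1) w i.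
  by rewrite big_ltn ?ltnS // addn_gt0 w_gt0.
apply: dvdn_leq; first by rewrite muln_gt0 expn_gt0 h_gt0 rest_gt0.
by rewrite rest mulnBr -[h ^ j * h]mulnC -expnS dvdn_sub.
Qed.

(* A majorization inequality: if x is positive and nonincreasing on [0, m)
   and every tail sum of the nonnegative sequence z is at most the
   corresponding tail sum of x, then prod z <= prod x.  The proof shows
   sum_l (z_l / x_l) <= m by Abel summation and concludes by AM-GM. *)
Section Majorization.
Local Open Scope ring_scope.
Variables (R : realFieldType) (m : nat) (x z : nat -> R).
Hypothesis x_gt0 : forall l, (l < m)%N -> 0 < x l.
Hypothesis x_nonincr : forall l, (l.+1 < m)%N -> x l.+1 <= x l.
Hypothesis z_ge0 : forall l, (l < m)%N -> 0 <= z l.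
Hypothesis tails_le : forall i, (i <= m)%N ->
  \sum_(i <= l < m) z l <= \sum_(i <= l < m) x l.

(* Abel summation: since the tail gaps are nonnegative and 1/x increases,
   the weighted gaps dominate the total gap from i on divided by x_i. *)
Lemma tail_gap_le (i : nat) : (i < m)%N ->
  (\sum_(i <= l < m) x l - \sum_(i <= l < m) z l) / x i
  <= \sum_(i <= l < m) (x l - z l) / x l.
Proof.
suff gap : forall k j, (j + k.+1)%N = m ->
    (\sum_(j <= l < m) x l - \sum_(j <= l < m) z l) / x j
    <= \sum_(j <= l < m) (x l - z l) / x l.
  by move=> lt_im; apply: (gap (m - i.+1)%N); rewrite addnS -addSn subnKC.
elim=> [|k IH] j jk_m; first by rewrite -jk_m addn1 !big_nat1.
have lt_jm : (j < m)%N by rewrite -jk_m addnS ltnS leq_addr.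
have lt_j1m : (j.+1 < m)%N by rewrite -jk_m !addnS !ltnS leq_addr.
have gap_next : 0 <= \sum_(j.+1 <= l < m) x l - \sum_(j.+1 <= l < m) z l.
  by rewrite subr_ge0 tails_le.
rewrite !(big_ltn lt_jm) opprD addrACA mulrDl lerD2l.
apply: le_trans (IH j.+1 _); last by rewrite addSnnS.
by rewrite ler_wpM2l // lef_pV2 ?posrE ?x_gt0 ?x_nonincr.
Qed.

Lemma ratio_sum_le : \sum_(0 <= l < m) z l / x l <= m%:R.
Proof.
have [->|m_gt0] := posnP m; first by rewrite big_geq.
have gap_ge0 : 0 <= \sum_(0 <= l < m) (x l - z l) / x l.
  apply: le_trans (tail_gap_le m_gt0).
  by apply: divr_ge0; [rewrite subr_ge0 tails_le | apply/ltW/x_gt0].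
have -> : \sum_(0 <= l < m) z l / x l = m%:R - \sum_(0 <= l < m) (x l - z l) / x l.
  rewrite -[m in m%:R]subn0 -sumr_const_nat -sumrB.
  apply: eq_big_nat => l /andP [_ lt_lm].
  by rewrite mulrBl divff ?gt_eqF ?x_gt0 // opprB addrC subrK.
by rewrite lerBlDr lerDl.
Qed.

(* AM-GM on the ratios z_l / x_l, whose mean is at most 1. *)
Lemma prod_le_of_tails_le : \prod_(0 <= l < m) z l <= \prod_(0 <= l < m) x l.
Proof.
have [->|m_gt0] := posnP m; first by rewrite !big_geq.
pose ratio (i : 'I_m) := z i / x i.
have ratio_ge0 : {in predT, forall i, 0 <= ratio i}.
  by move=> i _; apply: divr_ge0; [apply: z_ge0 | apply/ltW/x_gt0].
have prod_ratio_le1 : \prod_(i in predT) ratio i <= 1.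
  apply: le_trans (leif_AGM ratio_ge0).1 _.
  rewrite cardT size_enum_ord; apply: exprn_ile1.
    by rewrite divr_ge0 ?sumr_ge0.
  rewrite ler_pdivrMr ?ltr0n // mul1r.
  by apply: le_trans ratio_sum_le; rewrite big_mkord.
have -> : \prod_(0 <= l < m) z l = \prod_(i in predT) ratio i * \prod_(0 <= l < m) x l.
  rewrite !big_mkord -big_split; apply: eq_bigr => i _.
  by rewrite /= /ratio divfK ?gt_eqF ?x_gt0.
rewrite -[leRHS]mul1r ler_wpM2r // big_mkord prodr_ge0 // => i _.
by rewrite ltW ?x_gt0.
Qed.
End Majorization.

Lemma sum_nat_sub (V : zmodType) (F : nat -> V) (i j k : nat) :
  (i <= j <= k)%N ->
  (\sum_(i <= l < j) F l = \sum_(i <= l < k) F l - \sum_(j <= l < k) F l)%R.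
Proof. by case/andP=> le_ij le_jk; rewrite (big_cat_nat le_ij le_jk) /= addrK. Qed.

Lemma syl_prod_gt0 (k : nat) : (0 < syl_prod k)%N.
Proof. by elim: k => //= k IH; rewrite muln_gt0 IH. Qed.

Section SylvesterProfile.
Local Open Scope ring_scope.
Variable R : realFieldType.

Definition syl_inv (k : nat) : R := (syl_prod k)%:R^-1.
Definition syl_profile (n i : nat) : R :=
  if (i < n)%N then (sylvester i)%:R^-1 else syl_inv n.

Lemma syl_profile_ge0 (n i : nat) : 0 <= syl_profile n i.
Proof. by rewrite /syl_profile /syl_inv; case: ifP; rewrite invr_ge0 ler0n. Qed.

(* The Egyptian fraction identity 1/p = 1/(p+1) + 1/(p(p+1)) with
   p = y_0 ... y_(k-1), so that p + 1 = y_k. *)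
Lemma syl_inv_rec (k : nat) : syl_inv k = (sylvester k)%:R^-1 + syl_inv k.+1.
Proof.
rewrite /syl_inv /sylvester /= natrM natrD.
have p_neq0 : (syl_prod k)%:R != 0 :> R by rewrite pnatr_eq0 -lt0n syl_prod_gt0.
have p1_neq0 : 1 + (syl_prod k)%:R != 0 :> R by rewrite paddr_eq0 ?ler01 ?ler0n // oner_eq0.
by field; rewrite p_neq0 p1_neq0.
Qed.

Lemma syl_profile_prod (n j : nat) : (j <= n)%N ->
  \prod_(0 <= i < j) syl_profile n i = syl_inv j.
Proof.
elim: j => [|j IH] le_jn; first by rewrite big_geq // /syl_inv invr1.
rewrite big_nat_recr //= (IH (ltnW le_jn)) /syl_profile le_jn /syl_inv /=.
by rewrite natrM invfM mulrC.
Qed.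

Lemma syl_profile_tail (n j : nat) : (j <= n)%N ->
  \sum_(j <= i < n.+1) syl_profile n i = syl_inv j.
Proof.
move=> le_jn; rewrite -(subKn le_jn); elim: (n - j)%N (leq_subr j n) => [|k IH] le_kn.
  by rewrite subn0 big_nat1 /syl_profile ltnn.
have lt_jn : (n - k.+1 < n)%N by rewrite -subSn // subSS leq_subr.
rewrite (big_ltn (ltnW lt_jn : n - k.+1 < n.+1)%N) subnSK // (IH (ltnW le_kn)).
by rewrite /syl_profile lt_jn [in RHS]syl_inv_rec subnSK.
Qed.
End SylvesterProfile.

Section SylvesterBound.
Local Open Scope ring_scope.
Variables (R : realFieldType) (n : nat) (x : nat -> R).
Hypothesis x_gt0 : forall i, (i < n.+1)%N -> 0 < x i.
Hypothesis x_nonincr : forall i, (i.+1 < n.+1)%N -> x i.+1 <= x i.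
Hypothesis x_sum1 : \sum_(0 <= i < n.+1) x i = 1.
Hypothesis x_prefix : forall j, (j < n)%N ->
  \prod_(0 <= i < j.+1) x i <= \sum_(j.+1 <= i < n.+1) x i.

Local Notation tail j := (\sum_(j <= i < n.+1) x i).

Lemma prefix_prod_le_tail (j : nat) : (j <= n)%N -> \prod_(0 <= i < j) x i <= tail j.
Proof. by case: j => [_|j /x_prefix //]; rewrite big_geq // x_sum1. Qed.

(* By strong induction: if tail j < syl_inv j, majorization applied to
   x_0..x_(j-1) against the profile gives syl_inv j <= x_0 ... x_(j-1),
   which is at most tail j. *)
Lemma tail_ge_syl_inv (j : nat) : (j <= n)%N -> syl_inv R j <= tail j.
Proof.
elim/ltn_ind: j => j IH le_jn; rewrite leNgt; apply/negP => tail_lt.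
have : syl_inv R j <= \prod_(0 <= i < j) x i.
  rewrite -(syl_profile_prod R le_jn); apply: prod_le_of_tails_le.
  - by move=> l lt_lj; apply/x_gt0/(leq_trans lt_lj (leqW le_jn)).
  - by move=> l lt_lj; apply/x_nonincr/(leq_trans lt_lj (leqW le_jn)).
  - by move=> l _; apply: syl_profile_ge0.
  move=> i le_ij; have le_in := leq_trans le_ij le_jn.
  have le_ijn : (i <= j <= n.+1)%N by rewrite le_ij leqW.
  rewrite !(sum_nat_sub _ le_ijn) !syl_profile_tail //.
  have [->|ne_ij] := eqVneq i j; first by rewrite !subrr.
  by apply: lerB; [apply: IH; rewrite // ltn_neqAle ne_ij | apply: ltW].
by rewrite leNgt (le_lt_trans (prefix_prod_le_tail le_jn) tail_lt).
Qed.

(* Majorization of x_0..x_n by the whole profile, whose product is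
   (1/y_0) ... (1/y_(n-1)) * 1/(y_0 ... y_(n-1)) = syl_inv n ^ 2. *)
Lemma prod_ge_syl_inv_sq : syl_inv R n ^+ 2 <= \prod_(0 <= i < n.+1) x i.
Proof.
have := @prod_le_of_tails_le R n.+1 x (syl_profile R n) x_gt0 x_nonincr.
rewrite big_nat_recr //= syl_profile_prod //.
have -> : syl_profile R n n = syl_inv R n by rewrite /syl_profile ltnn.
rewrite -expr2; apply=> [l _|i le_in1]; first exact: syl_profile_ge0.
have [->|ne_in1] := eqVneq i n.+1; first by rewrite !big_geq.
have le_in : (i <= n)%N by rewrite -ltnS ltn_neqAle ne_in1.
by rewrite syl_profile_tail // tail_ge_syl_inv.
Qed.
End SylvesterBound.

Section IntegerBound.
Local Open Scope ring_scope.

(* Integer form of the analytic bound: positive nonincreasing weights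
   w_0 >= ... >= w_n each dividing their sum h satisfy
   h^(n+1) <= w_0 ... w_n * (y_0 ... y_(n-1))^2.  Apply the bound above to
   x_i = w_i / h; the prefix condition is prefix_prod_le. *)
Lemma weights_pow_le (n : nat) (w : nat -> nat) :
  (forall i, (i <= n)%N -> (0 < w i)%N) ->
  (forall i, (i < n)%N -> (w i.+1 <= w i)%N) ->
  (forall i, (i <= n)%N -> (w i %| \sum_(0 <= k < n.+1) w k)%N) ->
  ((\sum_(0 <= k < n.+1) w k) ^ n.+1 <= \prod_(0 <= i < n.+1) w i * syl_prod n ^ 2)%N.
Proof.
set h := (\sum_(0 <= k < n.+1) w k)%N => w_gt0 w_nonincr w_dvd.
have h_gt0 : (0 < h)%N by rewrite /h big_ltn // addn_gt0 w_gt0.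
have hR_gt0 : 0 < h%:R :> rat by rewrite ltr0n.
pose x i : rat := (w i)%:R / h%:R.
have prod_x j : \prod_(0 <= i < j) x i = (\prod_(0 <= i < j) w i)%N%:R / h%:R ^+ j.
  by rewrite prodf_div natr_prod prodr_const_nat subn0.
have sum_x i : \sum_(i <= k < n.+1) x k = (\sum_(i <= k < n.+1) w k)%N%:R / h%:R.
  by rewrite -mulr_suml natr_sum.
have := @prod_ge_syl_inv_sq _ n x.
rewrite prod_x ler_pdivlMr ?exprn_gt0 // /syl_inv exprVn mulrC.
rewrite ler_pdivrMr ?exprn_gt0 ?ltr0n ?syl_prod_gt0 // -!natrX -natrM ler_nat.
apply=> [i lt_in|i lt_in||j lt_jn].
- by rewrite divr_gt0 ?ltr0n ?w_gt0.
- by rewrite ler_pM2r ?invr_gt0 // ler_nat w_nonincr.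
- by rewrite sum_x -/h divff ?gt_eqF.
rewrite prod_x sum_x ler_pdivrMr ?exprn_gt0 // exprS mulrA divfK ?gt_eqF //.
by rewrite -natrX -natrM ler_nat mulnC; apply: prefix_prod_le.
Qed.
End IntegerBound.

Lemma sorted_weights (m : nat) (lam : 'I_m -> nat) :
  exists w : nat -> nat,
    [/\ forall i, i < m -> exists j, w i = lam j,
        forall i, i.+1 < m -> w i.+1 <= w i,
        \sum_(0 <= i < m) w i = \sum_j lam j &
        \prod_(0 <= i < m) w i = \prod_j lam j].
Proof.
pose s := sort geq [seq lam j | j <- enum 'I_m].
have s_size : size s = m by rewrite size_sort size_map size_enum_ord.
have s_perm : perm_eq s [seq lam j | j <- enum 'I_m] by rewrite perm_sort.
have big_s (idx : nat) (op : Monoid.com_law idx) :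
    \big[op/idx]_(0 <= i < m) nth 0 s i = \big[op/idx]_j lam j.
  rewrite -[m in LHS]s_size -(big_nth 0 xpredT id) (perm_big _ s_perm) big_map.
  by rewrite big_enum.
exists (nth 0 s); split; rewrite ?big_s //.
  move=> i lt_im; have : nth 0 s i \in s by rewrite mem_nth // s_size.
  by rewrite mem_sort => /mapP [j _ ->]; exists j.
have /(sortedP 0) s_sorted : sorted geq s by apply: sort_sorted => a b; apply: leq_total.
by move=> i; rewrite -[m]s_size; apply: s_sorted.
Qed.

Lemma pow_le_cancel (h P t n : nat) :
  0 < h -> h ^ n.+2 <= P * t ^ 2 -> P <= h ^ n -> h <= t.
Proof.
move=> h_gt0 upper P_le; rewrite -(@leq_exp2r _ _ 2) //.
rewrite -(@leq_pmul2l (h ^ n)) ?expn_gt0 ?h_gt0 // -expnD addn2.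
by apply: leq_trans upper _; rewrite leq_mul.
Qed.

Lemma divisor_weights_sum_le (n : nat) (lam : 'I_n.+1 -> nat) :
  (forall i, 0 < lam i) -> \big[gcdn/0]_i lam i = 1 ->
  (forall i, lam i %| \sum_j lam j) -> \sum_i lam i <= syl_prod n.
Proof.
case: n lam => [|n] lam lam_gt0 lam_gcd lam_dvd.
  by move: lam_gcd; rewrite !big_ord1 => ->.
have [w [w_lam w_nonincr w_sum w_prod]] := sorted_weights lam.
have h_gt0 : 0 < \sum_j lam j by rewrite (bigD1 ord0) // addn_gt0 lam_gt0.
have prod_le : \prod_j lam j <= (\sum_j lam j) ^ n.
  by apply: dvdn_leq; [rewrite expn_gt0 h_gt0 | apply: weights_prod_dvd].
apply: (pow_le_cancel h_gt0 _ prod_le).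
rewrite -w_sum -w_prod; apply: weights_pow_le => [i|i|i] lt_i.
- by have [j ->] := w_lam i lt_i.
- exact: w_nonincr.
- by have [j ->] := w_lam i lt_i; rewrite w_sum.
Qed.

Theorem mainTheorem10 (n : nat) (rho : 'I_n.+1 -> 'rV[int]_n)
  (lam : 'I_n.+1 -> nat) :
  (forall i, primitive (rho i)) ->
  spans_positively rho ->
  are_weights rho lam ->
  gorenstein rho ->
  canonical_sing rho ->
  (\sum_(i < n.+1) lam i <= t_seq n)%N.
Proof.
move=> _ _ lam_weights gor _.
have lam_dvd := gorenstein_weight_dvd lam_weights gor.
have [lam_gt0 [lam_gcd _]] := lam_weights.
by rewrite /t_seq /sylvester addKn; apply: divisor_weights_sum_le.
Qed.
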